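(* Let $n\ge1$ be odd, $\varepsilon\ge0$, $U$ a unitary on a finite-dimensional Hilbert space, $\widetilde\Pi,\Pi$ orthogonal projectors, and $W\colon\mathrm{img}\,\Pi\to\mathrm{img}\,\widetilde\Pi$ an isometry such that for all unit vectors $|\psi\rangle\in\mathrm{img}\,\Pi$ $$\left\|\sin\left(\tfrac{\pi}{2n}\right)W|\psi\rangle-\widetilde\Pi U|\psi\rangle\right\|\le\varepsilon.$$ Then there exist $\Phi\in\mathbb{R}^n$ and a sign $s\in\{+1,-1\}$ such that $\tilde U:=s\,U_\Phi$ satisfies, for all unit vectors $|\psi\rangle\in\mathrm{img}\,\Pi$, $$\left\|W|\psi\rangle-\widetilde\Pi\tilde U|\psi\rangle\right\|\le 2n\varepsilon.$$
   Context: For odd $n$ and $\Phi=(\phi_1,\ldots,\phi_n)$: $U_\Phi:=e^{i\phi_1(2\widetilde\Pi-I)}U\prod_{j=1}^{(n-1)/2}\left(e^{i\phi_{2j}(2\Pi-I)}U^\dagger e^{i\phi_{2j+1}(2\widetilde\Pi-I)}U\right)$ (product written left to right). *)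

(* complex numbers as pairs of Stdlib reals; d x d complex
   matrices as functions nat -> nat -> C (only indices < d matter). *)
From Stdlib Require Import Reals Lia.
Open Scope R_scope.

Definition C : Type := (R * R)%type.
Definition RtoC (r : R) : C := (r, 0).
Definition C0 : C := (0, 0).
Definition C1 : C := (1, 0).
Definition Ci : C := (0, 1).
Definition Cadd (a b : C) : C := (fst a + fst b, snd a + snd b).
Definition Cmul (a b : C) : C :=
  (fst a * fst b - snd a * snd b, fst a * snd b + snd a * fst b).
Definition Copp (a : C) : C := (- fst a, - snd a).
Definition Cconj (a : C) : C := (fst a, - snd a).
Definition Cnorm2 (a : C) : R := fst a * fst a + snd a * snd a.

Fixpoint Csum (n : nat) (f : nat -> C) : C :=
  match n with O => C0 | S m => Cadd (Csum m f) (f m) end.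
Fixpoint Rsum (n : nat) (f : nat -> R) : R :=
  match n with O => 0 | S m => Rsum m f + f m end.

Definition Vec : Type := nat -> C.
Definition Mat : Type := nat -> nat -> C.

Definition mmul (d : nat) (A B : Mat) : Mat :=
  fun i j => Csum d (fun k => Cmul (A i k) (B k j)).
Definition mapply (d : nat) (A : Mat) (v : Vec) : Vec :=
  fun i => Csum d (fun k => Cmul (A i k) (v k)).
Definition adj (A : Mat) : Mat := fun i j => Cconj (A j i).
Definition Id : Mat := fun i j => if Nat.eqb i j then C1 else C0.
Definition madd (A B : Mat) : Mat := fun i j => Cadd (A i j) (B i j).
Definition mscale (c : C) (A : Mat) : Mat := fun i j => Cmul c (A i j).
Definition vsub (u v : Vec) : Vec := fun i => Cadd (u i) (Copp (v i)).
Definition vscale (c : C) (v : Vec) : Vec := fun i => Cmul c (v i).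

Definition vnorm (d : nat) (v : Vec) : R := sqrt (Rsum d (fun i => Cnorm2 (v i))).

Definition meq (d : nat) (A B : Mat) : Prop :=
  forall i j, (i < d)%nat -> (j < d)%nat -> A i j = B i j.

Definition unitary (d : nat) (U : Mat) : Prop :=
  meq d (mmul d (adj U) U) Id /\ meq d (mmul d U (adj U)) Id.
Definition projector (d : nat) (P : Mat) : Prop :=
  meq d (mmul d P P) P /\ meq d (adj P) P.

Definition in_img (d : nat) (P : Mat) (v : Vec) : Prop :=
  exists w : Vec, forall i, (i < d)%nat -> v i = mapply d P w i.

Definition isometry_between (d : nat) (P Pt W : Mat) : Prop :=
  forall psi, in_img d P psi ->
    in_img d Pt (mapply d W psi) /\ vnorm d (mapply d W psi) = vnorm d psi.

Definition refl (P : Mat) : Mat := madd (mscale (RtoC 2) P) (mscale (RtoC (-1)) Id).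
(* e^{i phi (2P - I)} ; since (2P-I)^2 = I for a projector P, the exponential
   equals cos(phi) I + i sin(phi) (2P - I). *)
Definition expi_refl (phi : R) (P : Mat) : Mat :=
  madd (mscale (RtoC (cos phi)) Id) (mscale (Cmul Ci (RtoC (sin phi))) (refl P)).

Definition qsp_block (d : nat) (U P Pt : Mat) (Phi : nat -> R) (j : nat) : Mat :=
  mmul d (mmul d (mmul d (expi_refl (Phi (2 * j)%nat) P) (adj U))
                 (expi_refl (Phi (2 * j + 1)%nat) Pt)) U.

Fixpoint qsp_blocks (d : nat) (U P Pt : Mat) (Phi : nat -> R) (k : nat) : Mat :=
  match k with
  | O => Id
  | S k' => mmul d (qsp_blocks d U P Pt Phi k') (qsp_block d U P Pt Phi (S k'))
  end.

(* U_Phi for odd n, Phi = (Phi 1, ..., Phi n) *)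
Definition UPhi (d : nat) (U P Pt : Mat) (Phi : nat -> R) (n : nat) : Mat :=
  mmul d (mmul d (expi_refl (Phi 1%nat) Pt) U) (qsp_blocks d U P Pt Phi ((n - 1) / 2)).

From Pilot Require Import Defs.
From Stdlib Require Import Reals Lra Lia Setoid FunctionalExtensionality.
Open Scope R_scope.

(* Take the phases [0, PI/2, ..., PI/2] and the sign [+1]. Since
   [e^{i (PI/2) (2X - I)} = i (2X - I)], the sequence [UPhi] then maps [psi] to
   [G^k (U psi)], where [n = 2k + 1] and [G = -U (2P - I) U^dagger (2Pt - I)] is the
   Grover iterate. Write [th = PI/(2n)], [a = W psi], [u = U psi]. In the exact case
   [eps = 0], [G] maps [w al = sin (al - th) a + cos al u] to [w (al + 2 th)], and
   [w th = cos th * u], [w (PI/2) = cos th * a]. In general the defect of one step is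
   a combination of [Pt u - sin th * a] and of its dual [P (U^dagger a - sin th * psi)],
   both of norm at most [eps], so each step costs at most [4 eps]. As [G] is an
   isometry the errors add up to [cos th * |G^k u - a| <= 4 k eps], and
   [2k <= n cos th] turns this into [2 n eps]. For [n = 1] the claim is the
   hypothesis itself. *)

Lemma C_eq (p q : Defs.C) : fst p = fst q -> snd p = snd q -> p = q.
Proof. destruct p, q; simpl; intros -> ->; reflexivity. Qed.

Ltac cring :=
  apply C_eq; cbn [Cadd Cmul Copp Cconj RtoC Defs.C0 Defs.C1 Ci fst snd]; ring.

Lemma Csum_ext n f g : (forall i, (i < n)%nat -> f i = g i) -> Csum n f = Csum n g.
Proof.
  induction n as [|n IH]; intros Hfg; simpl; [reflexivity|].
  f_equal; [apply IH; intros i Hi|]; apply Hfg; lia.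
Qed.

Lemma Csum_C0 n : Csum n (fun _ => C0) = C0.
Proof. induction n as [|n IH]; simpl; [|rewrite IH]; cring. Qed.

Lemma Csum_add n f g : Csum n (fun i => Cadd (f i) (g i)) = Cadd (Csum n f) (Csum n g).
Proof. induction n as [|n IH]; simpl; [|rewrite IH]; cring. Qed.

Lemma Csum_mul_l n c f : Cmul c (Csum n f) = Csum n (fun i => Cmul c (f i)).
Proof. induction n as [|n IH]; simpl; [|rewrite <- IH]; cring. Qed.

Lemma Csum_mul_r n c f : Cmul (Csum n f) c = Csum n (fun i => Cmul (f i) c).
Proof. induction n as [|n IH]; simpl; [|rewrite <- IH]; cring. Qed.

Lemma Csum_conj n f : Cconj (Csum n f) = Csum n (fun i => Cconj (f i)).
Proof. induction n as [|n IH]; simpl; [|rewrite <- IH]; cring. Qed.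

Lemma Csum_swap n m (f : nat -> nat -> Defs.C) :
  Csum n (fun i => Csum m (f i)) = Csum m (fun j => Csum n (fun i => f i j)).
Proof.
  induction n as [|n IH]; simpl.
  - symmetry; apply Csum_C0.
  - rewrite IH, <- Csum_add; reflexivity.
Qed.

Lemma Rsum_ext n f g : (forall i, (i < n)%nat -> f i = g i) -> Rsum n f = Rsum n g.
Proof.
  induction n as [|n IH]; intros Hfg; simpl; [reflexivity|].
  f_equal; [apply IH; intros i Hi|]; apply Hfg; lia.
Qed.

Lemma Rsum_nonneg n f : (forall i, (i < n)%nat -> 0 <= f i) -> 0 <= Rsum n f.
Proof.
  induction n as [|n IH]; intros Hf; simpl; [lra|].
  assert (0 <= Rsum n f) by (apply IH; intros i Hi; apply Hf; lia).
  assert (0 <= f n) by (apply Hf; lia).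
  lra.
Qed.

Lemma fst_Csum n f : fst (Csum n f) = Rsum n (fun i => fst (f i)).
Proof. induction n as [|n IH]; simpl; [|rewrite <- IH]; reflexivity. Qed.

(* Vectors and matrices are total functions on [nat]; only the entries below
   [d] are meaningful, so vectors are compared with [veq d]. *)
Definition veq (d : nat) (u v : Vec) : Prop := forall i, (i < d)%nat -> u i = v i.

Add Parametric Relation d : Vec (veq d)
  reflexivity proved by (fun u i _ => eq_refl)
  symmetry proved by (fun u v H i Hi => eq_sym (H i Hi))
  transitivity proved by (fun u v w H1 H2 i Hi => eq_trans (H1 i Hi) (H2 i Hi))
  as veq_rel.

Definition vadd (u v : Vec) : Vec := fun i => Cadd (u i) (v i).

Ltac vring :=
  lazymatch goal with
  | |- veq _ _ _ => intros ? _
  | |- _ = _ => apply functional_extensionality; intros ?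
  end;
  unfold vadd, vsub, vscale; cring.

Add Parametric Morphism d : vadd with signature veq d ==> veq d ==> veq d as vadd_veq.
Proof. intros u u' Hu v v' Hv i Hi; unfold vadd; rewrite Hu, Hv by exact Hi; reflexivity. Qed.

Add Parametric Morphism d : vsub with signature veq d ==> veq d ==> veq d as vsub_veq.
Proof. intros u u' Hu v v' Hv i Hi; unfold vsub; rewrite Hu, Hv by exact Hi; reflexivity. Qed.

Add Parametric Morphism d : vscale with signature eq ==> veq d ==> veq d as vscale_veq.
Proof. intros c u u' Hu i Hi; unfold vscale; rewrite Hu by exact Hi; reflexivity. Qed.

Add Parametric Morphism d M : (mapply d M) with signature veq d ==> eq as mapply_veq.
Proof.
  intros u v Huv; apply functional_extensionality; intros i.
  apply Csum_ext; intros k Hk; rewrite Huv by exact Hk; reflexivity.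
Qed.

Add Parametric Morphism d M : (mapply d M) with signature veq d ==> veq d as mapply_veq_veq.
Proof. intros u v Huv; rewrite Huv; reflexivity. Qed.

Lemma vscale_1 v : vscale (RtoC 1) v = v.
Proof. vring. Qed.

Lemma vsub_vscale c u v : vsub (vscale c u) (vscale c v) = vscale c (vsub u v).
Proof. vring. Qed.

Lemma mapply_vadd d M u v : mapply d M (vadd u v) = vadd (mapply d M u) (mapply d M v).
Proof.
  apply functional_extensionality; intros i; unfold mapply, vadd.
  rewrite <- Csum_add; apply Csum_ext; intros; cring.
Qed.

Lemma mapply_vscale d M c v : mapply d M (vscale c v) = vscale c (mapply d M v).
Proof.
  apply functional_extensionality; intros i; unfold mapply, vscale.
  rewrite Csum_mul_l; apply Csum_ext; intros; cring.
Qed.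

Lemma mapply_vsub d M u v : mapply d M (vsub u v) = vsub (mapply d M u) (mapply d M v).
Proof.
  replace (vsub u v) with (vadd u (vscale (RtoC (-1)) v)) by vring.
  rewrite mapply_vadd, mapply_vscale; vring.
Qed.

Lemma mapply_mmul d A B v : mapply d (mmul d A B) v = mapply d A (mapply d B v).
Proof.
  apply functional_extensionality; intros i; unfold mapply, mmul.
  transitivity (Csum d (fun k => Csum d (fun l => Cmul (A i l) (Cmul (B l k) (v k))))).
  - apply Csum_ext; intros k _; rewrite Csum_mul_r; apply Csum_ext; intros; cring.
  - rewrite Csum_swap; apply Csum_ext; intros; symmetry; apply Csum_mul_l.
Qed.

Lemma mapply_madd d A B v : mapply d (madd A B) v = vadd (mapply d A v) (mapply d B v).
Proof.
  apply functional_extensionality; intros i; unfold mapply, madd, vadd.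
  rewrite <- Csum_add; apply Csum_ext; intros; cring.
Qed.

Lemma mapply_mscale d c A v : mapply d (mscale c A) v = vscale c (mapply d A v).
Proof.
  apply functional_extensionality; intros i; unfold mapply, mscale, vscale.
  rewrite Csum_mul_l; apply Csum_ext; intros; cring.
Qed.

Lemma mapply_Id d v : veq d (mapply d Id v) v.
Proof.
  intros i Hi; unfold mapply.
  transitivity (Csum d (fun k => if Nat.eqb k i then v i else C0)).
  - apply Csum_ext; intros k _; unfold Id.
    rewrite Nat.eqb_sym; destruct (Nat.eqb_spec k i) as [->|]; cring.
  - clear - Hi; induction d as [|d IH]; simpl; [lia|].
    destruct (Nat.eqb_spec d i) as [->|Hne].
    + rewrite (Csum_ext _ _ (fun _ => C0)), Csum_C0; [cring|].
      intros k Hk; destruct (Nat.eqb_spec k i); [lia|reflexivity].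
    + rewrite IH by lia; cring.
Qed.

Lemma mapply_meq d A B v : meq d A B -> veq d (mapply d A v) (mapply d B v).
Proof. intros HAB i Hi; apply Csum_ext; intros k Hk; rewrite HAB by assumption; reflexivity. Qed.

Lemma iter_mapply_vscale d M c v j :
  Nat.iter j (mapply d M) (vscale c v) = vscale c (Nat.iter j (mapply d M) v).
Proof. induction j as [|j IH]; simpl; [|rewrite IH, mapply_vscale]; reflexivity. Qed.

(** * Inner product and norm *)

Definition rdot (d : nat) (u v : Vec) : R := fst (Csum d (fun i => Cmul (Cconj (u i)) (v i))).

Add Parametric Morphism d : (rdot d) with signature veq d ==> veq d ==> eq as rdot_veq.
Proof.
  intros u u' Hu v v' Hv; unfold rdot; f_equal.
  apply Csum_ext; intros i Hi; rewrite Hu, Hv by exact Hi; reflexivity.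
Qed.

Add Parametric Morphism d : (vnorm d) with signature veq d ==> eq as vnorm_veq.
Proof.
  intros u v Huv; unfold vnorm; f_equal.
  apply Rsum_ext; intros i Hi; rewrite Huv by exact Hi; reflexivity.
Qed.

Lemma rdot_sym d u v : rdot d u v = rdot d v u.
Proof. unfold rdot; rewrite !fst_Csum; apply Rsum_ext; intros; simpl; ring. Qed.

Lemma rdot_vadd_l d u v w : rdot d (vadd u v) w = rdot d u w + rdot d v w.
Proof.
  unfold rdot.
  rewrite (Csum_ext _ _ (fun i => Cadd (Cmul (Cconj (u i)) (w i)) (Cmul (Cconj (v i)) (w i))))
    by (intros; unfold vadd; cring).
  rewrite Csum_add; reflexivity.
Qed.

Lemma rdot_vscale_l d r u w : rdot d (vscale (RtoC r) u) w = r * rdot d u w.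
Proof.
  unfold rdot.
  rewrite (Csum_ext _ _ (fun i => Cmul (RtoC r) (Cmul (Cconj (u i)) (w i))))
    by (intros; unfold vscale; cring).
  rewrite <- Csum_mul_l; simpl; ring.
Qed.

Lemma rdot_vsub_l d u v w : rdot d (vsub u v) w = rdot d u w - rdot d v w.
Proof.
  replace (vsub u v) with (vadd u (vscale (RtoC (-1)) v)) by vring.
  rewrite rdot_vadd_l, rdot_vscale_l; ring.
Qed.

Lemma rdot_vadd_r d u v w : rdot d w (vadd u v) = rdot d w u + rdot d w v.
Proof. rewrite !(rdot_sym d w); apply rdot_vadd_l. Qed.

Lemma rdot_vscale_r d r u w : rdot d w (vscale (RtoC r) u) = r * rdot d w u.
Proof. rewrite !(rdot_sym d w); apply rdot_vscale_l. Qed.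

Lemma rdot_vsub_r d u v w : rdot d w (vsub u v) = rdot d w u - rdot d w v.
Proof. rewrite !(rdot_sym d w); apply rdot_vsub_l. Qed.

Lemma rdot_adj d M u v : rdot d (mapply d M u) v = rdot d u (mapply d (adj M) v).
Proof.
  unfold rdot, mapply, adj; f_equal.
  transitivity (Csum d (fun i => Csum d (fun k => Cmul (Cconj (u k)) (Cmul (Cconj (M i k)) (v i))))).
  - apply Csum_ext; intros i _; rewrite Csum_conj, Csum_mul_r; apply Csum_ext; intros; cring.
  - rewrite Csum_swap; apply Csum_ext; intros; symmetry; apply Csum_mul_l.
Qed.

Lemma rdot_self_nonneg d v : 0 <= rdot d v v.
Proof. unfold rdot; rewrite fst_Csum; apply Rsum_nonneg; intros; simpl; nra. Qed.

Lemma vnorm_rdot d v : vnorm d v = sqrt (rdot d v v).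
Proof.
  unfold vnorm, rdot; rewrite fst_Csum; f_equal.
  apply Rsum_ext; intros; unfold Cnorm2; simpl; ring.
Qed.

Lemma vnorm_nonneg d v : 0 <= vnorm d v.
Proof. apply sqrt_pos. Qed.

Lemma vnorm_sq d v : vnorm d v * vnorm d v = rdot d v v.
Proof. rewrite vnorm_rdot; apply sqrt_sqrt, rdot_self_nonneg. Qed.

Lemma vnorm_le d u v : rdot d u u <= rdot d v v -> vnorm d u <= vnorm d v.
Proof. rewrite !vnorm_rdot; apply sqrt_le_1_alt. Qed.

Lemma rdot_vadd_self d u v :
  rdot d (vadd u v) (vadd u v) = rdot d u u + 2 * rdot d u v + rdot d v v.
Proof. rewrite rdot_vadd_l, !rdot_vadd_r, (rdot_sym d v u); ring. Qed.

Lemma quadratic_nonneg_discr (a b c : R) :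
  0 <= a -> (forall t, 0 <= a * t * t - 2 * b * t + c) -> b * b <= a * c.
Proof.
  intros Ha Hq; destruct (Rle_lt_or_eq_dec 0 a Ha) as [Hpos|<-].
  - specialize (Hq (b / a)).
    replace (a * (b / a) * (b / a) - 2 * b * (b / a) + c) with (c - b * b / a) in Hq
      by (field; lra).
    apply (Rmult_le_compat_l a) in Hq; [|lra].
    replace (a * (c - b * b / a)) with (a * c - b * b) in Hq by (field; lra).
    lra.
  - destruct (Req_dec b 0) as [->|Hb]; [lra|].
    specialize (Hq ((c + 1) / (2 * b))).
    replace (0 * ((c + 1) / (2 * b)) * ((c + 1) / (2 * b)) - 2 * b * ((c + 1) / (2 * b)) + c)
      with (-1) in Hq by (field; assumption).
    lra.
Qed.

Lemma rdot_le_vnorm d u v : rdot d u v <= vnorm d u * vnorm d v.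
Proof.
  assert (Hdiscr : rdot d u v * rdot d u v <= rdot d u u * rdot d v v).
  { apply quadratic_nonneg_discr; [apply rdot_self_nonneg|intros t].
    replace (rdot d u u * t * t - 2 * rdot d u v * t + rdot d v v)
      with (rdot d (vsub (vscale (RtoC t) u) v) (vsub (vscale (RtoC t) u) v));
      [apply rdot_self_nonneg|].
    rewrite rdot_vsub_l, !rdot_vsub_r, !rdot_vscale_l, !rdot_vscale_r, (rdot_sym d v u); ring. }
  rewrite <- !vnorm_sq in Hdiscr.
  assert (0 <= vnorm d u * vnorm d v) by (apply Rmult_le_pos; apply vnorm_nonneg).
  nra.
Qed.

Lemma vnorm_vscale d r v : vnorm d (vscale (RtoC r) v) = Rabs r * vnorm d v.
Proof.
  rewrite !vnorm_rdot, rdot_vscale_l, rdot_vscale_r, <- Rmult_assoc.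
  rewrite sqrt_mult by (nra || apply rdot_self_nonneg).
  rewrite <- sqrt_Rsqr_abs; reflexivity.
Qed.

Lemma vnorm_vadd_le d u v : vnorm d (vadd u v) <= vnorm d u + vnorm d v.
Proof.
  pose proof (rdot_le_vnorm d u v); pose proof (vnorm_sq d u); pose proof (vnorm_sq d v).
  pose proof (vnorm_nonneg d u); pose proof (vnorm_nonneg d v).
  rewrite vnorm_rdot, rdot_vadd_self, <- (sqrt_square (vnorm d u + vnorm d v)) by lra.
  apply sqrt_le_1_alt; nra.
Qed.

Lemma vnorm_vscale_m1 d v : vnorm d (vscale (RtoC (-1)) v) = vnorm d v.
Proof. rewrite vnorm_vscale, Rabs_left by lra; ring. Qed.

Lemma vnorm_vsub_sym d u v : vnorm d (vsub u v) = vnorm d (vsub v u).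
Proof.
  replace (vsub v u) with (vscale (RtoC (-1)) (vsub u v)) by vring.
  symmetry; apply vnorm_vscale_m1.
Qed.

Lemma vnorm_vsub_le d u v : vnorm d (vsub u v) <= vnorm d u + vnorm d v.
Proof.
  replace (vsub u v) with (vadd u (vscale (RtoC (-1)) v)) by vring.
  rewrite <- (vnorm_vscale_m1 d v); apply vnorm_vadd_le.
Qed.

Lemma vnorm_vsub_triangle d x y z : vnorm d (vsub x z) <= vnorm d (vsub x y) + vnorm d (vsub y z).
Proof. replace (vsub x z) with (vadd (vsub x y) (vsub y z)) by vring; apply vnorm_vadd_le. Qed.

(** * Unitaries, projectors and reflections *)

Lemma adj_adj (A : Mat) : adj (adj A) = A.
Proof.
  apply functional_extensionality; intros i; apply functional_extensionality; intros j.
  unfold adj; cring.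
Qed.

Lemma unitary_adj d U : unitary d U -> unitary d (adj U).
Proof. intros [HUU HUU']; split; rewrite adj_adj; assumption. Qed.

Lemma unitary_adj_mapply d U v : unitary d U -> veq d (mapply d (adj U) (mapply d U v)) v.
Proof. intros [HUU _]; rewrite <- mapply_mmul, (mapply_meq d _ _ v HUU); apply mapply_Id. Qed.

Lemma unitary_mapply_adj d U v : unitary d U -> veq d (mapply d U (mapply d (adj U) v)) v.
Proof. intros [_ HUU]; rewrite <- mapply_mmul, (mapply_meq d _ _ v HUU); apply mapply_Id. Qed.

Lemma vnorm_unitary d U v : unitary d U -> vnorm d (mapply d U v) = vnorm d v.
Proof. intros HU; rewrite !vnorm_rdot, rdot_adj, (unitary_adj_mapply d U v HU); reflexivity. Qed.

Lemma proj_idem d P v : projector d P -> veq d (mapply d P (mapply d P v)) (mapply d P v).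
Proof. intros [HPP _]; rewrite <- mapply_mmul; apply mapply_meq, HPP. Qed.

Lemma rdot_proj d P u v : projector d P -> rdot d (mapply d P u) v = rdot d u (mapply d P v).
Proof. intros [_ HPadj]; rewrite rdot_adj, (mapply_meq d _ _ v HPadj); reflexivity. Qed.

Lemma rdot_proj_self d P v :
  projector d P -> rdot d (mapply d P v) (mapply d P v) = rdot d v (mapply d P v).
Proof. intros HP; rewrite rdot_proj, (proj_idem d P v HP) by exact HP; reflexivity. Qed.

Lemma vnorm_proj_le d P v : projector d P -> vnorm d (mapply d P v) <= vnorm d v.
Proof.
  intros HP; apply vnorm_le.
  pose proof (rdot_self_nonneg d (vsub v (mapply d P v))) as Hsq.
  rewrite rdot_vsub_l, !rdot_vsub_r, (rdot_sym d (mapply d P v) v), rdot_proj_self in Hsq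
    by exact HP.
  rewrite rdot_proj_self by exact HP; lra.
Qed.

Lemma in_img_proj d P v : projector d P -> in_img d P v -> veq d (mapply d P v) v.
Proof.
  intros HP [w Hw]; change (veq d v (mapply d P w)) in Hw.
  rewrite Hw; apply proj_idem, HP.
Qed.

Lemma vnorm_vsub_proj_le d P a x : projector d P -> in_img d P a ->
  vnorm d (vsub a (mapply d P x)) <= vnorm d (vsub x a).
Proof.
  intros HP Ha.
  assert (Hfactor : veq d (vsub a (mapply d P x)) (mapply d P (vsub a x)))
    by (rewrite mapply_vsub, (in_img_proj d P a HP Ha); reflexivity).
  rewrite Hfactor, vnorm_vsub_sym; apply vnorm_proj_le, HP.
Qed.

Lemma in_img_vscale d P c v : in_img d P v -> in_img d P (vscale c v).
Proof.
  intros [w Hw]; change (veq d v (mapply d P w)) in Hw.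
  exists (vscale c w); change (veq d (vscale c v) (mapply d P (vscale c w))).
  rewrite mapply_vscale, Hw; reflexivity.
Qed.

Lemma in_img_vadd d P u v : in_img d P u -> in_img d P v -> in_img d P (vadd u v).
Proof.
  intros [w Hw] [w' Hw']; change (veq d u (mapply d P w)) in Hw; change (veq d v (mapply d P w')) in Hw'.
  exists (vadd w w'); change (veq d (vadd u v) (mapply d P (vadd w w'))).
  rewrite mapply_vadd, Hw, Hw'; reflexivity.
Qed.

Lemma in_img_mapply d P w : in_img d P (mapply d P w).
Proof. exists w; intros; reflexivity. Qed.

Lemma mapply_refl d X v : veq d (mapply d (refl X) v) (vsub (vscale (RtoC 2) (mapply d X v)) v).
Proof. unfold refl; rewrite mapply_madd, !mapply_mscale, (mapply_Id d v); vring. Qed.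

Lemma refl_fix d P v : projector d P -> in_img d P v -> veq d (mapply d (refl P) v) v.
Proof. intros HP Hv; rewrite mapply_refl, (in_img_proj d P v HP Hv); vring. Qed.

Lemma vnorm_refl d P v : projector d P -> vnorm d (mapply d (refl P) v) = vnorm d v.
Proof.
  intros HP; rewrite mapply_refl, !vnorm_rdot; f_equal.
  rewrite rdot_vsub_l, !rdot_vsub_r, !rdot_vscale_l, !rdot_vscale_r, rdot_proj_self,
    (rdot_sym d (mapply d P v) v) by exact HP.
  ring.
Qed.

Definition conj_refl (d : nat) (U P : Mat) : Mat := mmul d (mmul d U (refl P)) (adj U).

Definition grover (d : nat) (U P Pt : Mat) : Mat :=
  mscale (RtoC (-1)) (mmul d (conj_refl d U P) (refl Pt)).

Lemma vnorm_conj_refl d U P v :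
  unitary d U -> projector d P -> vnorm d (mapply d (conj_refl d U P) v) = vnorm d v.
Proof.
  intros HU HP; unfold conj_refl.
  rewrite !mapply_mmul, vnorm_unitary, vnorm_refl, vnorm_unitary by auto using unitary_adj.
  reflexivity.
Qed.

Lemma vnorm_grover d U P Pt v : unitary d U -> projector d P -> projector d Pt ->
  vnorm d (mapply d (grover d U P Pt) v) = vnorm d v.
Proof.
  intros HU HP HPt; unfold grover.
  rewrite mapply_mscale, vnorm_vscale_m1, mapply_mmul, vnorm_conj_refl, vnorm_refl by assumption.
  reflexivity.
Qed.

Lemma iter_isometry_tracking d M (w : R -> Vec) (delta eta : R) :
  (forall v, vnorm d (mapply d M v) = vnorm d v) ->
  (forall al, vnorm d (vsub (mapply d M (w al)) (w (al + delta))) <= eta) ->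
  forall j al, vnorm d (vsub (Nat.iter j (mapply d M) (w al)) (w (al + INR j * delta))) <= INR j * eta.
Proof.
  intros Hiso Hstep j al; induction j as [|j IH]; simpl Nat.iter.
  - replace (al + INR 0 * delta) with al by (simpl; ring).
    replace (vsub (w al) (w al)) with (vscale (RtoC 0) (w al)) by vring.
    rewrite vnorm_vscale, Rabs_R0; simpl; lra.
  - set (al' := al + INR j * delta) in IH.
    replace (al + INR (S j) * delta) with (al' + delta) by (unfold al'; rewrite S_INR; ring).
    eapply Rle_trans; [apply (vnorm_vsub_triangle d _ (mapply d M (w al')))|].
    rewrite <- mapply_vsub, Hiso, S_INR.
    specialize (Hstep al'); lra.
Qed.

(** * Robust amplitude amplification *)

Lemma sin_rotation al th : sin (al + th) = sin (al - th) + 2 * sin th * cos al.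
Proof. rewrite sin_plus, sin_minus; ring. Qed.

Lemma cos_rotation al th :
  cos (al + 2 * th) = (1 - 4 * sin th * sin th) * cos al - 2 * sin th * sin (al - th).
Proof. rewrite cos_plus, cos_2a_sin, sin_2a, sin_minus; ring. Qed.

Lemma cos_PI_div_odd_lb k : (1 <= k)%nat ->
  2 * INR k <= (2 * INR k + 1) * cos (PI / (2 * (2 * INR k + 1))).
Proof.
  intros Hk; apply le_INR in Hk; simpl in Hk.
  set (m := 2 * INR k + 1); set (th := PI / (2 * m)).
  pose proof PI_RGT_0; pose proof PI_4.
  assert (Hth : th * (2 * m) = PI) by (unfold th; field; unfold m; lra).
  assert (Hth0 : 0 < th) by (unfold th; apply Rdiv_lt_0_compat; unfold m; lra).
  destruct (cos_bound th 0) as [Hcos _]; [lra|unfold m in Hth; nra|].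
  replace (cos_approx th (2 * 0 + 1)) with (1 - th * th / 2) in Hcos
    by (unfold cos_approx, cos_term; simpl; field).
  unfold m in *; nra.
Qed.

Section Amplification.

Variables (d : nat) (U P Pt W : Mat) (th eps : R).
Hypotheses (HU : unitary d U) (HP : projector d P) (HPt : projector d Pt)
  (HW : isometry_between d P Pt W) (Heps : 0 <= eps).
Hypothesis Happrox : forall psi, in_img d P psi -> vnorm d psi = 1 ->
  vnorm d (vsub (vscale (RtoC (sin th)) (mapply d W psi)) (mapply d Pt (mapply d U psi))) <= eps.

Lemma approx_homogeneous x : in_img d P x ->
  vnorm d (vsub (vscale (RtoC (sin th)) (mapply d W x)) (mapply d Pt (mapply d U x)))
    <= eps * vnorm d x.
Proof.
  intros Hx; destruct (HW x Hx) as [_ HWx].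
  set (e := vsub (vscale (RtoC (sin th)) (mapply d W x)) (mapply d Pt (mapply d U x))).
  pose proof (vnorm_nonneg d x).
  destruct (Req_dec (vnorm d x) 0) as [Hnull|Hnz].
  - apply Rle_trans with (Rabs (sin th) * vnorm d (mapply d W x) + vnorm d (mapply d U x)).
    + eapply Rle_trans; [apply vnorm_vsub_le|].
      rewrite vnorm_vscale; apply Rplus_le_compat_l, vnorm_proj_le, HPt.
    + rewrite HWx, vnorm_unitary, Hnull by exact HU; lra.
  - set (r := / vnorm d x).
    assert (Hr : r * vnorm d x = 1) by (unfold r; field; exact Hnz).
    assert (Hr0 : 0 < r) by (apply Rinv_0_lt_compat; lra).
    assert (Hscaled : vsub (vscale (RtoC (sin th)) (mapply d W (vscale (RtoC r) x)))
                           (mapply d Pt (mapply d U (vscale (RtoC r) x))) = vscale (RtoC r) e)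
      by (rewrite !mapply_vscale; unfold e; vring).
    pose proof (Happrox (vscale (RtoC r) x) (in_img_vscale d P _ x Hx)) as Hnormalized.
    rewrite Hscaled, !vnorm_vscale, Rabs_pos_eq in Hnormalized by lra.
    specialize (Hnormalized Hr).
    pose proof (vnorm_nonneg d e).
    nra.
Qed.

Lemma rdot_isometry u v : in_img d P u -> in_img d P v ->
  rdot d (mapply d W u) (mapply d W v) = rdot d u v.
Proof.
  intros Hu Hv.
  assert (Hsq : forall x, in_img d P x -> rdot d (mapply d W x) (mapply d W x) = rdot d x x).
  { intros x Hx; destruct (HW x Hx) as [_ Hn]; rewrite <- !vnorm_sq, Hn; reflexivity. }
  pose proof (Hsq _ (in_img_vadd d P u v Hu Hv)) as Huv.
  rewrite mapply_vadd, !rdot_vadd_self, (Hsq u Hu), (Hsq v Hv) in Huv.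
  lra.
Qed.

Variable psi : Vec.
Hypotheses (Hpsi : in_img d P psi) (Hunit : vnorm d psi = 1).

Let a := mapply d W psi.
Let u := mapply d U psi.
Let z := mapply d P (vsub (mapply d (adj U) a) (vscale (RtoC (sin th)) psi)).
Let f := vsub (mapply d Pt u) (vscale (RtoC (sin th)) a).

Lemma target_in_img : in_img d Pt a.
Proof. exact (proj1 (HW psi Hpsi)). Qed.

(* [|z|^2 = <z, U^dagger a - sin th * psi> = -<e, a>] because [W] preserves inner
   products on [img P] and [Pt a = a]; conclude by Cauchy-Schwarz and the hypothesis at [z]. *)
Lemma vnorm_dual_defect : vnorm d z <= eps.
Proof.
  assert (Hz : in_img d P z) by apply in_img_mapply.
  set (e := vsub (vscale (RtoC (sin th)) (mapply d W z)) (mapply d Pt (mapply d U z))).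
  assert (He : vnorm d e <= eps * vnorm d z) by exact (approx_homogeneous z Hz).
  assert (Hua : rdot d (mapply d U z) a = rdot d (mapply d Pt (mapply d U z)) a)
    by (rewrite (rdot_proj d Pt), (in_img_proj d Pt a HPt target_in_img) by exact HPt; reflexivity).
  assert (Hzpsi : rdot d z psi = rdot d (mapply d W z) a)
    by (unfold a; rewrite rdot_isometry by assumption; reflexivity).
  assert (Hzz : rdot d z z = rdot d (vscale (RtoC (-1)) e) a).
  { unfold z at 2; rewrite <- (rdot_proj d P), (in_img_proj d P z HP Hz) by exact HP.
    rewrite rdot_vsub_r, rdot_vscale_r, <- rdot_adj, Hua, Hzpsi.
    unfold e; rewrite rdot_vscale_l, rdot_vsub_l, rdot_vscale_l; ring. }
  pose proof (rdot_le_vnorm d (vscale (RtoC (-1)) e) a) as Hcs.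
  rewrite <- Hzz, <- vnorm_sq, vnorm_vscale_m1 in Hcs.
  assert (Ha1 : vnorm d a = 1) by (unfold a; rewrite (proj2 (HW psi Hpsi)); exact Hunit).
  pose proof (vnorm_nonneg d z).
  nra.
Qed.

Lemma vnorm_primal_defect : vnorm d f <= eps.
Proof. unfold f; rewrite vnorm_vsub_sym; apply Happrox; assumption. Qed.

Lemma conj_refl_target : veq d (mapply d (conj_refl d U P) a)
  (vsub (vscale (RtoC 2) (vadd (mapply d U z) (vscale (RtoC (sin th)) u))) a).
Proof.
  assert (HPa : veq d (mapply d P (mapply d (adj U) a)) (vadd z (vscale (RtoC (sin th)) psi))).
  { unfold z; rewrite mapply_vsub, mapply_vscale, (in_img_proj d P psi HP Hpsi); vring. }
  unfold conj_refl; rewrite !mapply_mmul, mapply_refl, mapply_vsub, mapply_vscale, HPa.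
  rewrite (unitary_mapply_adj d U a HU), mapply_vadd, mapply_vscale; reflexivity.
Qed.

Lemma conj_refl_initial : veq d (mapply d (conj_refl d U P) u) u.
Proof.
  unfold conj_refl, u; rewrite !mapply_mmul, (unitary_adj_mapply d U psi HU).
  rewrite (refl_fix d P psi HP Hpsi); reflexivity.
Qed.

Let w (al : R) : Vec := vadd (vscale (RtoC (sin (al - th))) a) (vscale (RtoC (cos al)) u).

Lemma grover_rotation_defect al :
  veq d (vsub (mapply d (grover d U P Pt) (w al)) (w (al + 2 * th)))
    (vscale (RtoC (-2)) (vadd (vscale (RtoC (sin (al + th))) (mapply d U z))
                              (vscale (RtoC (cos al)) (mapply d (conj_refl d U P) f)))).
Proof.
  assert (HPtu : mapply d Pt u = vadd f (vscale (RtoC (sin th)) a)) by (unfold f; vring).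
  unfold grover, w; rewrite mapply_mscale, mapply_mmul, mapply_vadd, !mapply_vscale.
  rewrite (refl_fix d Pt a HPt target_in_img), (mapply_refl d Pt u), HPtu.
  rewrite mapply_vadd, !mapply_vscale, mapply_vsub, mapply_vscale, mapply_vadd, mapply_vscale.
  rewrite conj_refl_target, conj_refl_initial.
  replace (al + 2 * th - th) with (al + th) by ring.
  rewrite cos_rotation, sin_rotation.
  vring.
Qed.

Lemma vnorm_grover_rotation_defect al :
  vnorm d (vsub (mapply d (grover d U P Pt) (w al)) (w (al + 2 * th))) <= 4 * eps.
Proof.
  rewrite grover_rotation_defect, vnorm_vscale, Rabs_left by lra.
  eapply Rle_trans; [apply Rmult_le_compat_l; [lra|apply vnorm_vadd_le]|].
  rewrite !vnorm_vscale, vnorm_unitary, vnorm_conj_refl by assumption.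
  assert (Hsin : Rabs (sin (al + th)) <= 1) by (apply Rabs_le, SIN_bound).
  assert (Hcos : Rabs (cos al) <= 1) by (apply Rabs_le, COS_bound).
  assert (Rabs (sin (al + th)) * vnorm d z <= 1 * eps)
    by (apply Rmult_le_compat; auto using Rabs_pos, vnorm_nonneg, vnorm_dual_defect).
  assert (Rabs (cos al) * vnorm d f <= 1 * eps)
    by (apply Rmult_le_compat; auto using Rabs_pos, vnorm_nonneg, vnorm_primal_defect).
  lra.
Qed.

Lemma grover_iterate_error k : (2 * INR k + 1) * th = PI / 2 ->
  Rabs (cos th) * vnorm d (vsub (Nat.iter k (mapply d (grover d U P Pt)) (mapply d U psi))
                                (mapply d W psi))
    <= 4 * INR k * eps.
Proof.
  intros Hk.
  pose proof (iter_isometry_tracking d (grover d U P Pt) w (2 * th) (4 * eps)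
    (fun v => vnorm_grover d U P Pt v HU HP HPt) vnorm_grover_rotation_defect k th) as Htrack.
  assert (Hstart : w th = vscale (RtoC (cos th)) u)
    by (unfold w; rewrite Rminus_diag, sin_0; vring).
  assert (Hend : w (th + INR k * (2 * th)) = vscale (RtoC (cos th)) a).
  { replace (th + INR k * (2 * th)) with (PI / 2) by lra.
    unfold w; rewrite sin_shift, cos_PI2; vring. }
  rewrite Hstart, Hend, iter_mapply_vscale, vsub_vscale, vnorm_vscale in Htrack.
  unfold u, a in Htrack; lra.
Qed.

Lemma grover_iterate_error_odd k : (1 <= k)%nat -> th = PI / (2 * (2 * INR k + 1)) ->
  vnorm d (vsub (Nat.iter k (mapply d (grover d U P Pt)) (mapply d U psi)) (mapply d W psi))
    <= 2 * (2 * INR k + 1) * eps.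
Proof.
  intros Hk1 Hth.
  assert (HK : 1 <= INR k) by (apply (le_INR 1); exact Hk1).
  pose proof (cos_PI_div_odd_lb k Hk1) as Hcos; rewrite <- Hth in Hcos.
  pose proof (grover_iterate_error k ltac:(rewrite Hth; field; lra)) as Herr.
  set (e := vnorm d _) in Herr |- *.
  assert (He : 0 <= e) by apply vnorm_nonneg.
  rewrite Rabs_pos_eq in Herr by nra.
  assert (2 * INR k * e <= (2 * INR k + 1) * (cos th * e)) by nra.
  assert ((2 * INR k + 1) * (cos th * e) <= (2 * INR k + 1) * (4 * INR k * eps))
    by (apply Rmult_le_compat_l; lra).
  apply (Rmult_le_reg_l (2 * INR k)); nra.
Qed.

End Amplification.

(** * The phases realizing the Grover iterate *)

Definition grover_phases (j : nat) : R := if Nat.eqb j 1 then 0 else PI / 2.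

Lemma mapply_expi_refl_0 d X v : veq d (mapply d (expi_refl 0 X) v) v.
Proof.
  unfold expi_refl; rewrite cos_0, sin_0, mapply_madd, !mapply_mscale, (mapply_Id d v).
  vring.
Qed.

Lemma mapply_expi_refl_PI2 d X v :
  mapply d (expi_refl (PI / 2) X) v = vscale Ci (mapply d (refl X) v).
Proof. unfold expi_refl; rewrite cos_PI2, sin_PI2, mapply_madd, !mapply_mscale; vring. Qed.

Lemma qsp_block_grover d U P Pt j y : (1 <= j)%nat ->
  mapply d U (mapply d (qsp_block d U P Pt grover_phases j) y)
    = mapply d (grover d U P Pt) (mapply d U y).
Proof.
  intros Hj.
  assert (Hphase : forall m, (2 <= m)%nat -> grover_phases m = PI / 2)
    by (intros m Hm; unfold grover_phases; destruct (Nat.eqb_spec m 1); [lia|reflexivity]).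
  unfold qsp_block, grover, conj_refl; rewrite !Hphase by lia.
  rewrite !mapply_mmul, mapply_mscale, !mapply_mmul, !mapply_expi_refl_PI2, !mapply_vscale.
  vring.
Qed.

Lemma qsp_blocks_grover d U P Pt k y :
  mapply d U (mapply d (qsp_blocks d U P Pt grover_phases k) y)
    = Nat.iter k (mapply d (grover d U P Pt)) (mapply d U y).
Proof.
  revert y; induction k as [|k IH]; intros y; simpl qsp_blocks.
  - rewrite (mapply_Id d y); reflexivity.
  - rewrite mapply_mmul, IH, qsp_block_grover, Nat.iter_succ_r by lia; reflexivity.
Qed.

Lemma UPhi_grover d U P Pt n psi : veq d (mapply d (UPhi d U P Pt grover_phases n) psi)
  (Nat.iter ((n - 1) / 2) (mapply d (grover d U P Pt)) (mapply d U psi)).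
Proof.
  unfold UPhi; rewrite !mapply_mmul; change (grover_phases 1) with 0.
  rewrite mapply_expi_refl_0, qsp_blocks_grover; reflexivity.
Qed.

Theorem mainTheorem13 (d n : nat) (eps : R) (U Pt P W : Mat)
  (Hodd : Nat.Odd n) (Hn : (1 <= n)%nat) (Heps : 0 <= eps)
  (HU : unitary d U) (HPt : projector d Pt) (HP : projector d P)
  (HW : isometry_between d P Pt W)
  (Happrox : forall psi : Vec, in_img d P psi -> vnorm d psi = 1 ->
     vnorm d (vsub (vscale (RtoC (sin (PI / (2 * INR n)))) (mapply d W psi))
                   (mapply d Pt (mapply d U psi))) <= eps) :
  exists (Phi : nat -> R) (s : R), (s = 1 \/ s = -1) /\
    forall psi : Vec, in_img d P psi -> vnorm d psi = 1 ->
      vnorm d (vsub (mapply d W psi)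
                    (mapply d Pt (mapply d (mscale (RtoC s) (UPhi d U P Pt Phi n)) psi)))
        <= 2 * INR n * eps.
Proof.
  destruct Hodd as [k ->].
  replace (INR (2 * k + 1)) with (2 * INR k + 1) in *
    by (rewrite plus_INR, mult_INR; simpl; ring).
  exists grover_phases, 1; split; [left; reflexivity|]; intros psi Hpsi Hunit.
  rewrite mapply_mscale, vscale_1, UPhi_grover.
  replace ((2 * k + 1 - 1) / 2)%nat with k
    by (rewrite Nat.add_sub, Nat.mul_comm, Nat.div_mul; lia).
  destruct k as [|k].
  - specialize (Happrox psi Hpsi Hunit).
    replace (PI / (2 * (2 * INR 0 + 1))) with (PI / 2) in Happrox by (simpl; field).
    rewrite sin_PI2, vscale_1 in Happrox; simpl in *; lra.
  - eapply Rle_trans; [apply vnorm_vsub_proj_le; [exact HPt|exact (proj1 (HW psi Hpsi))]|].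
    apply (grover_iterate_error_odd d U P Pt W _ eps HU HP HPt HW Heps Happrox); auto with arith.
Qed.
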